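(* Let $\mathcal{Y}=\{1,\dots,C\}$ be a finite label set and let $\Delta$ denote the set of probability distributions on $\mathcal{Y}$. Let $K\ge 1$, let $\mathcal{D}_1,\dots,\mathcal{D}_K$ be pairwise disjoint measurable subsets of an input space $\mathcal{X}$, and for each $k$ let $P_k$ be a probability measure on $\mathcal{X}$ with $P_k(\mathcal{D}_k)=1$. Let $q_1,\dots,q_K\ge 0$ with $\sum_{k=1}^K q_k=1$ and $P=\sum_{k=1}^K q_kP_k$. Let $\Phi^*:\mathcal{X}\to\Delta$ be measurable, and let $\Phi(\cdot;w)$, $\Phi(\cdot;w_1),\dots,\Phi(\cdot;w_K)$ be measurable maps $\mathcal{X}\to\Delta$ (a global model with parameter $w$ and local models with parameters $w_k$). Let $\delta(p,q)=\sup_{A\subseteq\mathcal{Y}}|p(A)-q(A)|$ be the total variation distance and define $\delta^\dagger(p,q):=\delta(p,q)^2$. Then $$\int \delta^\dagger(\Phi^*(x),\Phi(x;w))\,P(dx)\le L_1'+L_2',$$ where $$L_1'=\sum_{k=1}^K q_k\int_{\mathcal{D}_k} D_{KL}(\Phi^*(x)\,\|\,\Phi(x;w_k))\,P_k(dx),\qquad L_2'=\sum_{k=1}^K q_k\int_{\mathcal{D}_k} D_{KL}(\Phi(x;w_k)\,\|\,\Phi(x;w))\,P_k(dx),$$ and $D_{KL}$ denotes the Kullback–Leibler divergence (with values in $[0,\infty]$).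
   Context: This is the federated learning setting: client $k$ holds private data $\mathcal{D}_k$ drawn from distribution $P_k$, $q_k$ is the probability that a sample comes from client $k$, and $P$ is the distribution of the whole data. $\Phi^*$ is the ground-truth map, $\Phi(\cdot;w_k)$ the local models and $\Phi(\cdot;w)$ the global model, all of the same architecture and outputting probability vectors. *)

From HB Require Import structures.
From mathcomp Require Import all_boot all_order all_algebra.
From mathcomp Require Import all_classical all_reals all_analysis.
Set Implicit Arguments. Unset Strict Implicit. Unset Printing Implicit Defensive.
Import Order.TTheory GRing.Theory Num.Theory.
Import numFieldNormedType.Exports.
Local Open Scope classical_set_scope.
Local Open Scope ring_scope.

Definition is_prob_vec (R : realType) (C : nat) (p : 'I_C -> R) : Prop :=
  (forall i, 0 <= p i) /\ \sum_(i < C) p i = 1.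

Definition tv_dist (R : realType) (C : nat) (p q : 'I_C -> R) : R :=
  \big[Num.max/0]_(A : {set 'I_C}) `|\sum_(i in A) p i - \sum_(i in A) q i|.

Definition tv_dagger (R : realType) (C : nat) (p q : 'I_C -> R) : R :=
  tv_dist p q ^+ 2.

Definition kl_term (R : realType) (a b : R) : \bar R :=
  if a == 0 then 0%E
  else if b == 0 then +oo%E
  else (a * ln (a / b))%:E.

Definition KL (R : realType) (C : nat) (p q : 'I_C -> R) : \bar R :=
  (\sum_(i < C) kl_term (p i) (q i))%E.

From HB Require Import structures.
From mathcomp Require Import all_boot all_order all_algebra.
From mathcomp Require Import all_classical all_reals all_analysis.
From mathcomp Require Import measurable_realfun ring lra.
Set Implicit Arguments. Unset Strict Implicit. Unset Printing Implicit Defensive.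
Import Order.TTheory GRing.Theory Num.Theory.
Import numFieldNormedType.Exports.
Local Open Scope classical_set_scope.
Local Open Scope ring_scope.

(* Pinsker's inequality KL(p || q) >= |p - q|_1^2 / 2 follows by summing the
   pointwise bound a ln(a/b) >= (a - b) + 3/2 (a - b)^2 / (a + 2b) over the labels
   and applying Sedrakyan's (Cauchy-Schwarz) inequality with the weights p + 2q,
   whose total mass is 3.  Since delta(p, r) <= |p - r|_1 / 2 and
   ((u + v) / 2)^2 <= (u^2 + v^2) / 2, the triangle inequality through
   q = Phi(x; w_k) gives delta(p, r)^2 <= KL(p || q) + KL(q || r) pointwise.
   Integrating against P = sum_k q_k P_k, where P_k is concentrated on D_k,
   gives the claim. *)

Section pinsker.
Variable R : realType.
Implicit Types a b t : R.

Lemma is_deriveV (f : R -> R) (x v df : R) : f x != 0 -> is_derive x v f df ->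
  is_derive x v (fun y => (f y)^-1) (- (f x) ^- 2 * df).
Proof.
move=> fx0 [df_ <-]; apply: DeriveDef; first exact: derivableV.
by rewrite deriveV.
Qed.

(* A rational lower bound of ln, tangent to it to third order at t = 1;
   a * pinsker_rat (a / b) = (a - b) + 3/2 (a - b)^2 / (a + 2b). *)
Definition pinsker_rat t := 5 / 2 - (4 * t)^-1 - 27 / 4 / (t + 2).

Lemma is_derive_ln_sub_pinsker_rat t : 0 < t ->
  is_derive t 1 (fun s => ln s - pinsker_rat s) ((t - 1) ^+ 3 / (t ^+ 2 * (t + 2) ^+ 2)).
Proof.
move=> t0; have t_neq0 : t != 0 by rewrite gt_eqF.
have t2_neq0 : t + 2 != 0 by rewrite gt_eqF //; lra.
have d4t : is_derive t 1 (fun s : R => (4 * s)^-1) (- (4 * t) ^- 2 * (4 * 1)).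
  by apply: is_deriveV; rewrite ?mulf_neq0.
have dt2 : is_derive t 1 (fun s : R => (s + 2)^-1) (- (t + 2) ^- 2 * (1 + 0)).
  exact: is_deriveV.
have := is_deriveB (is_derive1_ln t0) (is_deriveB (is_deriveB (is_derive_cst (5 / 2 : R) t 1) d4t)
   (is_deriveZ (27 / 4) dt2)).
suff -> : (t - 1) ^+ 3 / (t ^+ 2 * (t + 2) ^+ 2) =
    t^-1 - (0 - - (4 * t) ^- 2 * (4 * 1) - (27 / 4) * (- (t + 2) ^- 2 * (1 + 0))) by [].
by field; rewrite t_neq0 t2_neq0.
Qed.

Lemma pinsker_rat_le_ln t : 0 < t -> pinsker_rat t <= ln t.
Proof.
move=> t0; rewrite -subr_ge0.
pose h s := ln s - pinsker_rat s.
have h1 : h 1 = 0 by rewrite /h /pinsker_rat ln1; field.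
have dh (s : R) : 0 < s -> derivable h s 1.
  by move=> s0; have [] := is_derive_ln_sub_pinsker_rat s0.
have h' (s : R) : 0 < s -> derive1 h s = (s - 1) ^+ 3 / (s ^+ 2 * (s + 2) ^+ 2).
  by move=> s0; rewrite derive1E; have [_ ->] := is_derive_ln_sub_pinsker_rat s0.
have den_ge0 (s : R) : 0 <= (s ^+ 2 * (s + 2) ^+ 2)^-1.
  by rewrite invr_ge0 mulr_ge0 ?sqr_ge0.
have ch (a b : R) : 0 < a -> {within `[a, b], continuous h}.
  move=> a0; apply: derivable_within_continuous => s.
  by rewrite in_itv /= => /andP[a_s _]; apply: dh; lra.
have [t1|t1] := leP 1 t; rewrite -h1 -/(h t).
  apply: (ger0_derive1_le_cc (f := h) _ _ (ch 1 t ltr01)); rewrite ?in_itv /= ?lexx ?t1 //.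
  - by move=> s; rewrite in_itv /= => /andP[s1 _]; apply: dh; lra.
  - move=> s; rewrite in_itv /= => /andP[s1 _]; rewrite h'; last by lra.
    by apply: mulr_ge0 (den_ge0 s); apply: exprn_ge0; lra.
apply: (ler0_derive1_le_cc (f := h) _ _ (ch t 1 t0)); rewrite ?in_itv /= ?lexx ?(ltW t1) //.
- by move=> s; rewrite in_itv /= => /andP[ts _]; apply: dh; lra.
- move=> s; rewrite in_itv /= => /andP[ts s1]; rewrite h'; last by lra.
  apply: mulr_le0_ge0 (den_ge0 s); rewrite exprS mulr_le0_ge0 ?sqr_ge0 //; lra.
Qed.

Lemma mul_ln_div_ge a b : 0 < a -> 0 < b ->
  (a - b) + 3 / 2 * ((a - b) ^+ 2 / (a + 2 * b)) <= a * ln (a / b).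
Proof.
move=> a0 b0; have := pinsker_rat_le_ln (divr_gt0 a0 b0).
have a_neq0 : a != 0 by rewrite gt_eqF.
have b_neq0 : b != 0 by rewrite gt_eqF.
have ab_neq0 : a + 2 * b != 0 by rewrite gt_eqF //; lra.
rewrite (_ : _ + _ = a * pinsker_rat (a / b)); first by apply: ler_wpM2l; lra.
by rewrite /pinsker_rat; field; rewrite a_neq0 b_neq0 ab_neq0.
Qed.

Lemma kl_term_ge a b : 0 <= a -> 0 <= b ->
  (((a - b) + 3 / 2 * ((a - b) ^+ 2 / (a + 2 * b)))%:E <= kl_term a b)%E.
Proof.
move=> a0 b0; rewrite /kl_term.
have [->|a_neq0] := eqVneq a 0.
  have [->|b_neq0] := eqVneq b 0; first by rewrite !(subr0, mulr0, mul0r, addr0).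
  rewrite lee_fin (_ : (0 - b) ^+ 2 / (0 + 2 * b) = b / 2); first lra.
  by field.
have [//|b_neq0] := eqVneq b 0; first by rewrite leey.
by rewrite lee_fin mul_ln_div_ge // lt_def ?a_neq0 ?b_neq0.
Qed.

Lemma mul_normr_le_sqr_div_add (x w c : R) : 0 <= w -> (w = 0 -> x = 0) ->
  2 * c * `|x| <= x ^+ 2 / w + c ^+ 2 * w.
Proof.
move=> w0 wx; have [/[dup]/wx -> ->|w_neq0] := eqVneq w 0.
  by rewrite normr0 !mulr0 expr0n /= mul0r addr0.
rewrite -subr_ge0 (_ : _ - _ = (`|x| - c * w) ^+ 2 / w).
  by rewrite divr_ge0 ?sqr_ge0.
by rewrite -[x ^+ 2]real_normK ?num_real //; field.
Qed.

Lemma sedrakyan (I : finType) (x w : I -> R) :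
  (forall i, 0 <= w i) -> (forall i, w i = 0 -> x i = 0) ->
  (\sum_i `|x i|) ^+ 2 <= (\sum_i w i) * \sum_i x i ^+ 2 / w i.
Proof.
move=> w0 wx; set T := \sum_i _; set W := \sum_i _; set S := \sum_i _.
have amgm (c : R) : 2 * c * T <= S + c ^+ 2 * W.
  rewrite mulr_sumr /S /W mulr_sumr -big_split; apply: ler_sum => i _.
  exact: (mul_normr_le_sqr_div_add _ (w0 i) (@wx i)).
have [W0|W_neq0] := eqVneq W 0.
  have T0 : T = 0.
    apply: big1 => i _; rewrite (wx i) ?normr0 //.
    by move/psumr_eq0P : W0; apply.
  by rewrite W0 T0 expr0n mul0r.
have Wgt0 : 0 < W by rewrite lt_def W_neq0 sumr_ge0.
have := amgm (T / W). (* the optimal AM-GM parameter *)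
rewrite (_ : 2 * (T / W) * T = 2 * (T ^+ 2 / W)); last by field.
rewrite (_ : (T / W) ^+ 2 * W = T ^+ 2 / W); last by field.
rewrite -subr_ge0 => H; rewrite -subr_ge0 (_ : _ - _ = W * (S - T ^+ 2 / W)).
  by apply: mulr_ge0; lra.
by field.
Qed.

Lemma pinsker (C : nat) (p q : 'I_C -> R) : is_prob_vec p -> is_prob_vec q ->
  (((\sum_i `|p i - q i|) ^+ 2 / 2)%:E <= KL p q)%E.
Proof.
move=> [p0 p1] [q0 q1].
pose w i := p i + 2 * q i.
have w0 i : 0 <= w i by have := p0 i; have := q0 i; rewrite /w; lra.
have wx i : w i = 0 -> p i - q i = 0 by have := p0 i; have := q0 i; rewrite /w; lra.
have w3 : \sum_i w i = 3 by rewrite big_split /= -mulr_sumr p1 q1; lra.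
apply: le_trans (lee_sum _ (fun i _ => kl_term_ge (p0 i) (q0 i))).
rewrite sumEFin lee_fin big_split /= sumrB p1 q1 subrr add0r -mulr_sumr.
have := sedrakyan w0 wx; rewrite w3; lra.
Qed.

Lemma KL_ge0 (C : nat) (p q : 'I_C -> R) : is_prob_vec p -> is_prob_vec q ->
  (0 <= KL p q)%E.
Proof.
move=> hp hq; apply: le_trans (pinsker hp hq).
by rewrite lee_fin divr_ge0 ?sqr_ge0.
Qed.

End pinsker.

Section total_variation.
Variables (R : realType) (C : nat).
Implicit Types p q r : 'I_C -> R.

Lemma tv_dist_ge0 p r : 0 <= tv_dist p r.
Proof. exact: bigmax_ge_id. Qed.

Lemma tv_dist_le_half_l1 p r : \sum_i p i = \sum_i r i ->
  tv_dist p r <= (\sum_i `|p i - r i|) / 2.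
Proof.
move=> pr; apply: bigmax_le => [|A _]; first by rewrite divr_ge0 ?sumr_ge0.
have sumAc : \sum_(i | i \notin A) (p i - r i) = - \sum_(i in A) (p i - r i).
  apply/eqP; rewrite -addr_eq0 addrC; move/eqP: pr.
  by rewrite -subr_eq0 -sumrB (bigID (mem A)).
have nA := ler_norm_sum (index_enum 'I_C) (fun i => p i - r i) (mem A).
have nAc := ler_norm_sum (index_enum 'I_C) (fun i => p i - r i) [predC A].
rewrite /= sumAc normrN in nAc.
rewrite [X in _ <= X / 2](bigID (mem A)) /= -sumrB; lra.
Qed.

Lemma tv_dagger_le_KL_add p q r : is_prob_vec p -> is_prob_vec q -> is_prob_vec r ->
  ((tv_dagger p r)%:E <= KL p q + KL q r)%E.
Proof.
move=> hp hq hr; apply: le_trans (leeD (pinsker hp hq) (pinsker hq hr)).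
rewrite -EFinD lee_fin /tv_dagger.
have := tv_dist_le_half_l1 (etrans hp.2 (esym hr.2)).
have : \sum_i `|p i - r i| <= \sum_i `|p i - q i| + \sum_i `|q i - r i|.
  by rewrite -big_split; apply: ler_sum => i _; apply: ler_distD.
have := tv_dist_ge0 p r.
move: (tv_dist p r) (\sum_i `|p i - r i|) (\sum_i `|p i - q i|) (\sum_i `|q i - r i|).
move=> t a b c t0 abc ta; have tbc : t <= (b + c) / 2 by lra.
have : t * t <= (b + c) / 2 * ((b + c) / 2) by apply: ler_pM.
have := sqr_ge0 (b - c); rewrite !expr2; nra.
Qed.

End total_variation.

Section measurability.
Context d (X : measurableType d) (R : realType).

Lemma measurable_bigmaxr (I : Type) (s : seq I) (D : set X) (F : I -> X -> R) :
  measurable D -> (forall i, measurable_fun D (F i)) ->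
  measurable_fun D (fun x => \big[Num.max/0]_(i <- s) F i x).
Proof.
move=> mD mF; elim: s => [|i s IH].
  by under eq_fun do rewrite big_nil; exact: measurable_cst.
by under eq_fun do rewrite big_cons; exact: measurable_maxr.
Qed.

Lemma measurable_tv_dagger (C : nat) (a b : X -> 'I_C -> R) :
  (forall i, measurable_fun setT (a^~ i)) -> (forall i, measurable_fun setT (b^~ i)) ->
  measurable_fun setT (fun x => tv_dagger (a x) (b x)).
Proof.
move=> ma mb; apply: measurable_funX; apply: measurable_bigmaxr => // A.
have msum_in (c : X -> 'I_C -> R) : (forall i, measurable_fun setT (c^~ i)) ->
    measurable_fun setT (fun x => \sum_(i in A) c x i).
  move=> mc; under eq_fun do rewrite big_mkcond /=.
  by apply: measurable_sum => i; case: (i \in A).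
by apply: measurableT_comp => //; apply: measurable_funB; apply: msum_in.
Qed.

Lemma measurable_kl_term (a b : X -> R) : measurable_fun setT a -> measurable_fun setT b ->
  (forall x, 0 <= a x) -> (forall x, 0 <= b x) ->
  measurable_fun setT (fun x => kl_term (a x) (b x)).
Proof.
move=> ma mb a0 b0.
rewrite (_ : (fun x => kl_term (a x) (b x)) = fun x => if a x == 0 then 0%E
   else if b x == 0 then +oo%E else (a x * (ln (a x) - ln (b x)))%:E); last first.
  apply/funext => x; rewrite /kl_term.
  have [//|a_neq0] := eqVneq (a x) 0; have [//|b_neq0] := eqVneq (b x) 0.
  by rewrite ln_div // posrE lt_def ?a_neq0 ?b_neq0 ?a0 ?b0.
apply: measurable_fun_ifT; [exact: measurable_fun_eqr | exact: measurable_cst |].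
apply: measurable_fun_ifT; [exact: measurable_fun_eqr | exact: measurable_cst |].
apply/measurable_EFinP; apply: measurable_funM => //.
by apply: measurable_funB; apply: measurableT_comp => //; exact: measurable_ln.
Qed.

Lemma measurable_KL (C : nat) (a b : X -> 'I_C -> R) :
  (forall i, measurable_fun setT (a^~ i)) -> (forall i, measurable_fun setT (b^~ i)) ->
  (forall x, is_prob_vec (a x)) -> (forall x, is_prob_vec (b x)) ->
  measurable_fun setT (fun x => KL (a x) (b x)).
Proof.
move=> ma mb ha hb; apply: emeasurable_sum => i.
by apply: measurable_kl_term => // x; [exact: (ha x).1 | exact: (hb x).1].
Qed.

End measurability.

Section integration.
Context d (X : measurableType d) (R : realType).
Local Open Scope ereal_scope.

Lemma ge0_integral_mixture (K : nat) (mu : 'I_K -> {measure set X -> \bar R})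
    (w : 'I_K -> R) (P : {measure set X -> \bar R}) :
  (forall k, (0 <= w k)%R) ->
  (forall A, measurable A -> P A = \sum_(k < K) (w k)%:E * mu k A) ->
  forall f : X -> \bar R, measurable_fun setT f -> (forall x, 0 <= f x) ->
  \int[P]_x f x = \sum_(k < K) (w k)%:E * \int[mu k]_x f x.
Proof.
move=> w0 hP f mf f0.
(* msum wants a nat-indexed family: pad with the zero measure. *)
pose nu n : {measure set X -> \bar R} :=
  if insub n is Some k then mscale (NngNum (w0 k)) (mu k) else mzero.
have nuE (k : 'I_K) : nu k = mscale (NngNum (w0 k)) (mu k) by rewrite /nu valK.
rewrite (eq_measure_integral (msum nu K)) => [|A mA _]; last first.
  by rewrite hP //; apply: eq_bigr => k _; rewrite nuE.
rewrite ge0_integral_measure_sum //; apply: eq_bigr => k _.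
by rewrite nuE ge0_integral_mscale.
Qed.

Lemma ge0_integral_conull (mu : {measure set X -> \bar R}) (D : set X) (f : X -> \bar R) :
  measurable D -> mu (~` D) = 0 -> measurable_fun setT f -> (forall x, 0 <= f x) ->
  \int[mu]_x f x = \int[mu]_(x in D) f x.
Proof.
move=> mD muDc0 mf f0.
by rewrite (ge0_negligible_integral _ _ _ _ muDc0) ?setTD ?setCK //; exact: measurableC.
Qed.

End integration.

Theorem proposition1 (R : realType) (d : measure_display) (X : measurableType d)
  (C K : nat) (hK : (0 < K)%N)
  (D : 'I_K -> set X) (Pk : 'I_K -> probability X R) (q : 'I_K -> R)
  (P : probability X R)
  (Phistar Phiw : X -> 'I_C -> R) (Phik : 'I_K -> X -> 'I_C -> R)
  (hDm : forall k, measurable (D k))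
  (hDdisj : forall k l, k != l -> D k `&` D l = set0)
  (hPkD : forall k, Pk k (D k) = 1%E)
  (hq0 : forall k, 0 <= q k)
  (hq1 : \sum_(k < K) q k = 1)
  (hP : forall A, measurable A -> P A = (\sum_(k < K) (q k)%:E * Pk k A)%E)
  (hPhistar : forall x, is_prob_vec (Phistar x))
  (hPhiw : forall x, is_prob_vec (Phiw x))
  (hPhik : forall k x, is_prob_vec (Phik k x))
  (mPhistar : forall i, measurable_fun setT (fun x => Phistar x i))
  (mPhiw : forall i, measurable_fun setT (fun x => Phiw x i))
  (mPhik : forall k i, measurable_fun setT (fun x => Phik k x i)) :
  (\int[P]_x (tv_dagger (Phistar x) (Phiw x))%:E <=
     \sum_(k < K) (q k)%:E * \int[Pk k]_(x in D k) KL (Phistar x) (Phik k x)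
   + \sum_(k < K) (q k)%:E * \int[Pk k]_(x in D k) KL (Phik k x) (Phiw x))%E.
Proof.
pose f x := (tv_dagger (Phistar x) (Phiw x))%:E.
have f0 x : (0 <= f x)%E by rewrite lee_fin sqr_ge0.
have mf : measurable_fun setT f by apply/measurable_EFinP; exact: measurable_tv_dagger.
have mKL1 k : measurable_fun setT (fun x => KL (Phistar x) (Phik k x)).
  exact: measurable_KL.
have mKL2 k : measurable_fun setT (fun x => KL (Phik k x) (Phiw x)).
  exact: measurable_KL.
rewrite (ge0_integral_mixture hq0 hP mf f0) -big_split /=; apply: lee_sum => k _.
have Dc0 : Pk k (~` D k) = 0%E by rewrite probability_setC // hPkD subee.
rewrite -ge0_muleDr; last 2 first.
- by apply: integral_ge0 => x _; exact: KL_ge0.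
- by apply: integral_ge0 => x _; exact: KL_ge0.
apply: lee_wpmul2l; first by rewrite lee_fin.
rewrite (ge0_integral_conull (hDm k) Dc0 mf f0) -ge0_integralD //; last 4 first.
- by move=> x _; exact: KL_ge0.
- exact: measurable_funTS.
- by move=> x _; exact: KL_ge0.
- exact: measurable_funTS.
apply: ge0_le_integral => //.
- exact: measurable_funTS.
- by apply: emeasurable_funD; exact: measurable_funTS.
- by move=> x _; exact: tv_dagger_le_KL_add.
Qed.
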